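(* For $\lambda\in\mathbb R$ let $r_\lambda(x,y)=(x^2-y^2)^3+15\lambda x^2y^2(x^2-y^2)$. Then $r_0$ has unique signature $(3,3)$, $r_{1/5}=x^6-y^6$ has unique signature $(1,1)$, and for every $\lambda$ with $0<\lambda<\tfrac15$, $r_\lambda$ has unique signature $(2,2)$.
   Context: A representation of a real binary sextic $p$ is an expression $p=\sum_{j=1}^r\lambda_j(\alpha_jx+\beta_jy)^{6}$ with $r\ge0$, $\alpha_j,\beta_j\in\mathbb R$, $0\ne\lambda_j\in\mathbb R$; it is honest if the linear forms $\alpha_jx+\beta_jy$ are pairwise non-proportional. Its badge is $(a,b)$ where $a=\#\{j:\lambda_j>0\}$, $b=\#\{j:\lambda_j<0\}$; $\mathcal B(p)$ is the set of badges of honest representations. With $(a,b)\preceq(c,d)$ iff $a\le c,b\le d$, a signature is a minimal element of $\mathcal B(p)$; $p$ has unique signature $(u,v)$ if $(u,v)$ is the only minimal element. *)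

From Stdlib Require Import Reals List.
Import ListNotations.
Open Scope R_scope.

(* A binary real form is viewed as its polynomial function R -> R -> R
   (polynomials over R are determined by their values). *)
Definition binform := R -> R -> R.

(* A term (lambda, alpha, beta) stands for lambda * (alpha x + beta y)^6. *)
Definition term := (R * R * R)%type.
Definition lam (t : term) : R := fst (fst t).
Definition alp (t : term) : R := snd (fst t).
Definition bet (t : term) : R := snd t.

Definition term_val (t : term) (x y : R) : R :=
  lam t * (alp t * x + bet t * y) ^ 6.

Definition rep_val (L : list term) (x y : R) : R :=
  fold_right (fun t s => term_val t x y + s) 0 L.

Definition is_rep (p : binform) (L : list term) : Prop :=
  Forall (fun t => lam t <> 0) L /\ (forall x y, p x y = rep_val L x y).

Definition honest (L : list term) : Prop :=
  ForallOrdPairs (fun t u => alp t * bet u - alp u * bet t <> 0) L.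

Definition npos (L : list term) : nat :=
  length (filter (fun t => if Rlt_dec 0 (lam t) then true else false) L).
Definition nneg (L : list term) : nat :=
  length (filter (fun t => if Rlt_dec (lam t) 0 then true else false) L).

Definition in_badges (p : binform) (a b : nat) : Prop :=
  exists L, is_rep p L /\ honest L /\ npos L = a /\ nneg L = b.

Definition is_signature (p : binform) (u v : nat) : Prop :=
  in_badges p u v /\
  forall a b, in_badges p a b -> (a <= u)%nat -> (b <= v)%nat -> a = u /\ b = v.

Definition unique_signature (p : binform) (u v : nat) : Prop :=
  is_signature p u v /\ forall a b, is_signature p a b -> a = u /\ b = v.

Definition r_lam (l : R) : binform :=
  fun x y => (x^2 - y^2)^3 + 15 * l * x^2 * y^2 * (x^2 - y^2).

(* Lower bounds come from apolarity.  For a sextic h(a,b) let <h, .> be the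
   linear functional on binary sextics with <h, (a x + b y)^6> = h(a,b).  If
   p = sum_j l_j (a_j x + b_j y)^6 and h >= 0 vanishes at every node (a_j,b_j)
   with l_j > 0, then <h, p> = sum_j l_j h(a_j,b_j) <= 0.  Taking h = g^2 for
   a binary cubic g through the positive nodes, a representation of r_l with
   exactly k positive terms is excluded as soon as such a g has <g^2, r_l> > 0; this
   is arranged for k = 0 (g = a^3), for k = 1 when l < 1/5, and for k = 2 on
   honest representations of r_0 (g = the product of the two linear forms
   vanishing at the nodes times a well chosen linear form).
   Since r_l(y,x) = - r_l(x,y), exchanging x and y swaps the positive and the
   negative terms of a representation, so the same bounds hold for negative
   terms.  They are attained by honest representations made of antisymmetric
   pairs c (a x + b y)^6 - c (b x + a y)^6; for 0 < l < 1/5 the two pairs are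
   found by inverting a |-> a + 1/a.  A badge of B(p) that is below every
   badge of B(p) is the unique signature of p, which gives the theorem. *)

From Stdlib Require Import Reals Lra Lia Psatz List.
Import ListNotations.
Open Scope R_scope.

Lemma pow2_pos (x : R) : x <> 0 -> 0 < x^2.
Proof. intros Hx. simpl. rewrite Rmult_1_r. apply Rsqr_pos_lt, Hx. Qed.

Lemma fold_sum_nonpos {A : Type} (w : A -> R) (L : list A) :
  (forall t, In t L -> w t <= 0) -> fold_right (fun t s => w t + s) 0 L <= 0.
Proof.
  induction L as [|t L IH]; simpl; intros Hw; [lra|].
  assert (w t <= 0) by auto.
  assert (fold_right (fun t s => w t + s) 0 L <= 0) by auto.
  lra.
Qed.

Record sextic := Sextic { h0 : R; h1 : R; h2 : R; h3 : R; h4 : R; h5 : R; h6 : R }.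

Definition sextic_val (h : sextic) (a b : R) : R :=
  h0 h * a^6 + h1 h * a^5 * b + h2 h * a^4 * b^2 + h3 h * a^3 * b^3
  + h4 h * a^2 * b^4 + h5 h * a * b^5 + h6 h * b^6.

Record cubic := Cubic { g0 : R; g1 : R; g2 : R; g3 : R }.

Definition cubic_val (g : cubic) (a b : R) : R :=
  g0 g * a^3 + g1 g * a^2 * b + g2 g * a * b^2 + g3 g * b^3.

Definition cubic_sq (g : cubic) : sextic :=
  Sextic (g0 g ^ 2) (2 * g0 g * g1 g) (2 * g0 g * g2 g + g1 g ^ 2)
    (2 * g0 g * g3 g + 2 * g1 g * g2 g) (2 * g1 g * g3 g + g2 g ^ 2)
    (2 * g2 g * g3 g) (g3 g ^ 2).

Lemma cubic_sq_val (g : cubic) (a b : R) :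
  sextic_val (cubic_sq g) a b = cubic_val g a b ^ 2.
Proof. unfold sextic_val, cubic_val; simpl; ring. Qed.

(* A sextic form is determined by its values at
   the seven points (1,k), -3 <= k <= 3, so <h, .> can be written as a
   combination of these values; the weights are chosen so that
   <h, (a x + b y)^6> = h(a,b) (apolar_term). *)
Definition apolar (h : sextic) (f : binform) : R :=
  let '(Sextic c0 c1 c2 c3 c4 c5 c6) := h in
    ((-1/360)*c1 + (1/2700)*c2 + (1/960)*c3 + (-1/2160)*c4 + (-1/1440)*c5 + (1/720)*c6) * f 1 (-3)
  + ((1/40)*c1 + (-1/200)*c2 + (-1/120)*c3 + (1/180)*c4 + (1/360)*c5 + (-1/120)*c6) * f 1 (-2)
  + ((-1/8)*c1 + (1/20)*c2 + (13/960)*c3 + (-13/720)*c4 + (-1/288)*c5 + (1/48)*c6) * f 1 (-1)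
  + (c0 + (-49/540)*c2 + (7/270)*c4 + (-1/36)*c6) * f 1 0
  + ((1/8)*c1 + (1/20)*c2 + (-13/960)*c3 + (-13/720)*c4 + (1/288)*c5 + (1/48)*c6) * f 1 1
  + ((-1/40)*c1 + (-1/200)*c2 + (1/120)*c3 + (1/180)*c4 + (-1/360)*c5 + (-1/120)*c6) * f 1 2
  + ((1/360)*c1 + (1/2700)*c2 + (-1/960)*c3 + (-1/2160)*c4 + (1/1440)*c5 + (1/720)*c6) * f 1 3.

Lemma apolar_ext (h : sextic) (f f' : binform) :
  (forall x y, f x y = f' x y) -> apolar h f = apolar h f'.
Proof. intros Hff'. destruct h; simpl. rewrite !Hff'. reflexivity. Qed.

Lemma apolar_term (h : sextic) (t : term) :
  apolar h (term_val t) = lam t * sextic_val h (alp t) (bet t).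
Proof. destruct h; unfold apolar, term_val, sextic_val; simpl; field. Qed.

Lemma apolar_rep_val (h : sextic) (L : list term) :
  apolar h (rep_val L) =
  fold_right (fun t s => lam t * sextic_val h (alp t) (bet t) + s) 0 L.
Proof.
  induction L as [|t L IH]; simpl.
  - destruct h; unfold rep_val; simpl; ring.
  - rewrite <- IH, <- apolar_term. destruct h; unfold rep_val; simpl; ring.
Qed.

Definition pos_part (L : list term) : list term :=
  filter (fun t => if Rlt_dec 0 (lam t) then true else false) L.

Lemma in_pos_part (t : term) (L : list term) : In t L -> 0 < lam t -> In t (pos_part L).
Proof.
  intros Hin Hpos. apply filter_In. split; [exact Hin|].
  destruct (Rlt_dec 0 (lam t)); [reflexivity | contradiction].
Qed.

Lemma apolar_rep_nonpos (p : binform) (L : list term) (h : sextic) :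
  is_rep p L -> (forall a b, 0 <= sextic_val h a b) ->
  (forall t, In t (pos_part L) -> sextic_val h (alp t) (bet t) = 0) ->
  apolar h p <= 0.
Proof.
  intros [Hnz Hval] Hnonneg Hvanish.
  rewrite (apolar_ext h p (rep_val L) Hval), apolar_rep_val.
  apply fold_sum_nonpos. intros t Hin.
  rewrite Forall_forall in Hnz. specialize (Hnz t Hin).
  destruct (Rlt_dec 0 (lam t)) as [Hpos|Hpos].
  - rewrite (Hvanish t (in_pos_part t L Hin Hpos)). lra.
  - specialize (Hnonneg (alp t) (bet t)). nra.
Qed.

(* The quadratic form g |-> <g^2, r_l> on cubics. *)
Definition r_pairing (l : R) (g : cubic) : R :=
  g0 g ^ 2 + (l - 1/5) * (2 * g0 g * g2 g + g1 g ^ 2)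
  + (1/5 - l) * (2 * g1 g * g3 g + g2 g ^ 2) - g3 g ^ 2.

Lemma apolar_r_lam (l : R) (g : cubic) : apolar (cubic_sq g) (r_lam l) = r_pairing l g.
Proof. unfold apolar, cubic_sq, r_lam, r_pairing; simpl; field. Qed.

Lemma r_lam_obstruction (l : R) (L : list term) (g : cubic) :
  is_rep (r_lam l) L ->
  (forall t, In t (pos_part L) -> cubic_val g (alp t) (bet t) = 0) ->
  r_pairing l g <= 0.
Proof.
  intros Hrep Hvanish. rewrite <- apolar_r_lam.
  apply (apolar_rep_nonpos _ L); [exact Hrep | |].
  - intros a b. rewrite cubic_sq_val. apply pow2_ge_0.
  - intros t Hin. rewrite cubic_sq_val, (Hvanish t Hin). ring.
Qed.

Lemma witness_one (l a b : R) :
  l < 1/5 -> exists g, cubic_val g a b = 0 /\ 0 < r_pairing l g.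
Proof.
  intros Hl. destruct (Req_dec a 0) as [->|Ha].
  - exists (Cubic 1 0 0 0). unfold cubic_val, r_pairing; simpl. split; [ring | lra].
  - exists (Cubic (b^2) 0 (- a^2) 0). unfold cubic_val, r_pairing; simpl. split; [ring|].
    assert (0 < a^2) by (apply pow2_pos, Ha).
    assert (0 < (1/5 - l) * (a^2 * a^2)) by (apply Rmult_lt_0_compat; nra).
    assert (0 <= (1/5 - l) * (a^2 * b^2)) by (apply Rmult_le_pos; nra).
    assert (0 <= b^2 * b^2) by nra.
    nra.
Qed.

Lemma quadratic_form_positive (A B C : R) :
  A * C < B^2 -> exists s t, 0 < A * s^2 + 2 * B * s * t + C * t^2.
Proof.
  intros Hdisc. destruct (Rlt_dec 0 A) as [HA|HA].
  - exists 1, 0. lra.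
  - destruct (Req_dec A 0) as [->|HA0].
    + assert (HB : B <> 0) by (intros ->; nra).
      exists ((1 - C) / (2 * B)), 1.
      replace (0 * ((1 - C) / (2 * B))^2 + 2 * B * ((1 - C) / (2 * B)) * 1 + C * 1^2)
        with 1 by (field; exact HB).
      lra.
    + exists (- B), A. nra.
Qed.

(* For a quadratic q = c0 a^2 + c1 a b + c2 b^2 with distinct real roots,
   (s,t) |-> 5 <(q (s a + t b))^2, r_0> is the form with coefficients
   A = 5c0^2 - 2c0c2 - c1^2 + c2^2, B = 2c1(c2 - c0),
   C = -c0^2 + 2c0c2 + c1^2 - 5c2^2; it satisfies A C < B^2 because
   B^2 - A C = (c1^2 - 4c0c2 - (c2-c0)^2)^2 + 4 (c2-c0)^4. *)
Lemma linear_extension_discriminant (c0 c1 c2 : R) :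
  0 < c1^2 - 4 * c0 * c2 ->
  (5*c0^2 - 2*c0*c2 - c1^2 + c2^2) * (- c0^2 + 2*c0*c2 + c1^2 - 5*c2^2)
  < (2 * c1 * (c2 - c0))^2.
Proof.
  intros HD.
  assert (Hid : (2 * c1 * (c2 - c0))^2
      - (5*c0^2 - 2*c0*c2 - c1^2 + c2^2) * (- c0^2 + 2*c0*c2 + c1^2 - 5*c2^2)
    = (c1^2 - 4*c0*c2 - (c2 - c0)^2)^2 + 4 * ((c2 - c0)^2)^2) by ring.
  destruct (Req_dec (c2 - c0) 0) as [He|He].
  - assert (0 < (c1^2 - 4*c0*c2 - (c2 - c0)^2)^2) by (apply pow_lt; rewrite He; nra).
    assert (0 <= ((c2 - c0)^2)^2) by apply pow2_ge_0.
    lra.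
  - assert (0 < ((c2 - c0)^2)^2) by (apply pow_lt, pow2_pos, He).
    assert (0 <= (c1^2 - 4*c0*c2 - (c2 - c0)^2)^2) by apply pow2_ge_0.
    lra.
Qed.

(* Some cubic through two non-proportional nodes pairs positively with r_0:
   (b1 a - a1 b)(b2 a - a2 b)(s a + t b) for suitable s, t. *)
Lemma witness_two (a1 b1 a2 b2 : R) :
  a1 * b2 - a2 * b1 <> 0 ->
  exists g, cubic_val g a1 b1 = 0 /\ cubic_val g a2 b2 = 0 /\ 0 < r_pairing 0 g.
Proof.
  intros Hdet.
  set (c0 := b1 * b2). set (c1 := - (b1 * a2 + a1 * b2)). set (c2 := a1 * a2).
  assert (Hdisc : 0 < c1^2 - 4 * c0 * c2).
  { replace (c1^2 - 4 * c0 * c2) with ((a1 * b2 - a2 * b1)^2) by (unfold c0, c1, c2; ring).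
    apply pow2_pos, Hdet. }
  destruct (quadratic_form_positive _ _ _ (linear_extension_discriminant c0 c1 c2 Hdisc))
    as [s [t Hst]].
  exists (Cubic (s * c0) (s * c1 + t * c0) (s * c2 + t * c1) (t * c2)).
  split; [|split]; unfold cubic_val, r_pairing, c0, c1, c2 in *; simpl; [ring | ring | nra].
Qed.

Lemma ForallOrdPairs_filter {A : Type} (P : A -> A -> Prop) (f : A -> bool) (L : list A) :
  ForallOrdPairs P L -> ForallOrdPairs P (filter f L).
Proof.
  induction 1 as [|t L Ht HL IH]; simpl; [constructor|].
  destruct (f t); [|exact IH].
  constructor; [|exact IH].
  rewrite Forall_forall in *. intros u Hu. apply filter_In in Hu. apply Ht, Hu.
Qed.

Lemma npos_ge_1 (l : R) (L : list term) : is_rep (r_lam l) L -> (1 <= npos L)%nat.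
Proof.
  intros Hrep. change (1 <= length (pos_part L))%nat.
  destruct (pos_part L) as [|t P] eqn:E; simpl; [exfalso | lia].
  enough (r_pairing l (Cubic 1 0 0 0) <= 0) by (unfold r_pairing in *; simpl in *; lra).
  apply (r_lam_obstruction l L); [exact Hrep|]. rewrite E. intros t [].
Qed.

Lemma npos_ge_2 (l : R) (L : list term) :
  l < 1/5 -> is_rep (r_lam l) L -> (2 <= npos L)%nat.
Proof.
  intros Hl Hrep. pose proof (npos_ge_1 l L Hrep) as H1.
  change (1 <= length (pos_part L))%nat in H1. change (2 <= length (pos_part L))%nat.
  destruct (pos_part L) as [|t [|t' P]] eqn:E; simpl in *; [lia | exfalso | lia].
  destruct (witness_one l (alp t) (bet t) Hl) as [g [Hg Hpos]].
  enough (r_pairing l g <= 0) by lra.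
  apply (r_lam_obstruction l L); [exact Hrep|]. rewrite E. intros u [<-|[]]. exact Hg.
Qed.

Lemma npos_ge_3 (L : list term) : is_rep (r_lam 0) L -> honest L -> (3 <= npos L)%nat.
Proof.
  intros Hrep Hh. pose proof (npos_ge_2 0 L ltac:(lra) Hrep) as H2.
  pose proof (ForallOrdPairs_filter _ (fun t => if Rlt_dec 0 (lam t) then true else false) L Hh)
    as Hhpos.
  fold (pos_part L) in Hhpos.
  change (2 <= length (pos_part L))%nat in H2. change (3 <= length (pos_part L))%nat.
  destruct (pos_part L) as [|t1 [|t2 [|t3 P]]] eqn:E; simpl in *; [lia | lia | exfalso | lia].
  (* the two positive nodes are not proportional *)
  inversion Hhpos as [|? ? Hfirst]; subst. inversion Hfirst; subst.
  destruct (witness_two (alp t1) (bet t1) (alp t2) (bet t2)) as [g [Hg1 [Hg2 Hpos]]];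
    [assumption|].
  enough (r_pairing 0 g <= 0) by lra.
  apply (r_lam_obstruction 0 L); [exact Hrep|]. rewrite E. intros u [<-|[<-|[]]]; assumption.
Qed.

Lemma unique_signature_of_lower_bounds (p : binform) (u v : nat) :
  in_badges p u v ->
  (forall L, is_rep p L -> honest L -> (u <= npos L)%nat /\ (v <= nneg L)%nat) ->
  unique_signature p u v.
Proof.
  intros Hbadge Hlow. split; [split|].
  - exact Hbadge.
  - intros a b [L [Hrep [Hh [<- <-]]]] Ha Hb. destruct (Hlow L Hrep Hh). lia.
  - intros a b [[L [Hrep [Hh [<- <-]]]] Hmin].
    destruct (Hlow L Hrep Hh). destruct (Hmin u v Hbadge); lia.
Qed.

(* Exchanging x and y: the term l (a x + b y)^6 becomes -l (b x + a y)^6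
   when the represented form changes sign. *)
Definition swap_term (t : term) : term := (- lam t, bet t, alp t).

Lemma swap_rep_val (L : list term) (x y : R) :
  rep_val (map swap_term L) x y = - rep_val L y x.
Proof.
  induction L as [|t L IH]; unfold rep_val in *; simpl; [ring|].
  rewrite IH. unfold term_val, swap_term, lam, alp, bet; simpl. ring.
Qed.

Definition antisymmetric (p : binform) : Prop := forall x y, p y x = - p x y.

Lemma r_lam_antisymmetric (l : R) : antisymmetric (r_lam l).
Proof. intros x y. unfold r_lam. ring. Qed.

Lemma swap_is_rep (p : binform) (L : list term) :
  antisymmetric p -> is_rep p L -> is_rep p (map swap_term L).
Proof.
  intros Hanti [Hnz Hval]. split.
  - apply Forall_map. eapply Forall_impl; [|exact Hnz].
    intros t Ht. unfold swap_term, lam at 1; simpl. lra.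
  - intros x y. rewrite swap_rep_val, <- Hval, Hanti. ring.
Qed.

Lemma swap_honest (L : list term) : honest L -> honest (map swap_term L).
Proof.
  unfold honest. induction 1 as [|t L Ht HL IH]; simpl; constructor; [|exact IH].
  apply Forall_map. eapply Forall_impl; [|exact Ht].
  intros u Hu. unfold swap_term, alp, bet in *; simpl. lra.
Qed.

Lemma npos_swap (L : list term) : npos (map swap_term L) = nneg L.
Proof.
  induction L as [|t L IH]; [reflexivity|].
  unfold npos, nneg in *; simpl.
  destruct (Rlt_dec 0 (lam (swap_term t))) as [H1|H1];
  destruct (Rlt_dec (lam t) 0) as [H2|H2]; unfold swap_term, lam at 1 in H1; simpl in H1;
    try lra; simpl; rewrite ?IH; reflexivity.
Qed.

Lemma antisymmetric_unique_signature (p : binform) (k : nat) :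
  antisymmetric p -> in_badges p k k ->
  (forall L, is_rep p L -> honest L -> (k <= npos L)%nat) ->
  unique_signature p k k.
Proof.
  intros Hanti Hbadge Hlow. apply unique_signature_of_lower_bounds; [exact Hbadge|].
  intros L Hrep Hh. split; [auto|].
  rewrite <- npos_swap. apply Hlow; [apply swap_is_rep | apply swap_honest]; assumption.
Qed.

Definition antipairs (T : list term) : list term := flat_map (fun t => [t; swap_term t]) T.

Lemma antipairs_counts (T : list term) :
  Forall (fun t => lam t <> 0) T ->
  Forall (fun t => lam t <> 0) (antipairs T) /\
  npos (antipairs T) = length T /\ nneg (antipairs T) = length T.
Proof.
  induction 1 as [|t T Ht HT [IHnz [IHpos IHneg]]]; [repeat split; constructor|].
  unfold antipairs in *; simpl.
  assert (Hs : lam (swap_term t) = - lam t) by reflexivity.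
  split; [repeat constructor; [exact Ht | rewrite Hs; lra | exact IHnz]|].
  unfold npos, nneg in *; simpl. rewrite Hs.
  destruct (Rlt_dec 0 (lam t)); destruct (Rlt_dec 0 (- lam t)); destruct (Rlt_dec (lam t) 0);
    destruct (Rlt_dec (- lam t) 0); try lra; simpl; rewrite ?IHpos, ?IHneg; split; reflexivity.
Qed.

Lemma antipairs_badge (p : binform) (T : list term) :
  Forall (fun t => lam t <> 0) T ->
  (forall x y, p x y = rep_val (antipairs T) x y) -> honest (antipairs T) ->
  in_badges p (length T) (length T).
Proof.
  intros Hnz Hval Hh. destruct (antipairs_counts T Hnz) as [Hnz' [Hpos Hneg]].
  exists (antipairs T). repeat split; assumption.
Qed.

Lemma badge_r0 : in_badges (r_lam 0) 3 3.
Proof.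
  apply (antipairs_badge _ [(41/20, 1, 0); (1/120, 1, 2); (1/120, 1, -2)]).
  - repeat constructor; unfold lam; simpl; lra.
  - intros x y. unfold r_lam, antipairs, swap_term, rep_val, term_val, lam, alp, bet; simpl.
    field.
  - unfold honest, antipairs, swap_term; simpl. repeat constructor; unfold alp, bet; simpl; lra.
Qed.

Lemma badge_r15 : in_badges (r_lam (1/5)) 1 1.
Proof.
  apply (antipairs_badge _ [(1, 1, 0)]).
  - repeat constructor; unfold lam; simpl; lra.
  - intros x y. unfold r_lam, antipairs, swap_term, rep_val, term_val, lam, alp, bet; simpl.
    field.
  - unfold honest, antipairs, swap_term; simpl. repeat constructor; unfold alp, bet; simpl; lra.
Qed.

Definition joukowski (a : R) : R := a + / a.

Lemma joukowski_onto (B : R) : 2 < B -> exists b, 1 < b /\ joukowski b = B.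
Proof.
  intros HB. set (s := sqrt (B^2 - 4)).
  assert (Hs : s^2 = B^2 - 4) by (unfold s; rewrite <- Rsqr_pow2; apply Rsqr_sqrt; nra).
  assert (0 <= s) by apply sqrt_pos.
  set (b := (B + s) / 2). assert (Hb : 1 < b) by (unfold b; lra).
  assert (Hq : b^2 + 1 = B * b).
  { replace (b^2) with ((B^2 + 2 * B * s + s^2) / 4) by (unfold b; field). rewrite Hs.
    unfold b; field. }
  exists b. split; [exact Hb|].
  unfold joukowski. apply Rmult_eq_reg_r with b; [|lra].
  rewrite Rmult_plus_distr_r, Rinv_l by lra. lra.
Qed.

(* The determinant of the linear system for the coefficients c1, c2 of
   c1 ((x + a y)^6 - (a x + y)^6) + c2 ((x + b y)^6 - (b x + y)^6). *)
Definition pair_det (a b : R) : R := (1 - a^6) * (b - b^5) - (1 - b^6) * (a - a^5).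

Lemma pair_det_neq0 (a b : R) : 1 < a -> 1 < b -> a <> b -> pair_det a b <> 0.
Proof.
  intros Ha Hb Hab.
  replace (pair_det a b) with
    ((1 - a^2) * (1 - b^2) * (b - a) * (1 + a^2 + b^2 - a*b*(a^2 + b^2) - (a*b)^3))
    by (unfold pair_det; ring).
  assert (1 < a * b) by nra.
  assert (1 < (a * b)^3) by (apply Rlt_pow_R1; [lra | lia]).
  assert (0 < (a * b - 1) * (a^2 + b^2)) by (apply Rmult_lt_0_compat; nra).
  repeat apply Rmult_integral_contrapositive_currified; intro; nra.
Qed.

Definition four_term_pairs (a b : R) : list term :=
  [((b - b^5) / pair_det a b, 1, a); ((a^5 - a) / pair_det a b, 1, b)].

Lemma four_term_rep_val (a b : R) :
  1 < a -> 1 < b -> a <> b -> forall x y,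
  r_lam (1/5 - 1 / (1 + joukowski a * joukowski b)) x y
  = rep_val (antipairs (four_term_pairs a b)) x y.
Proof.
  intros Ha Hb Hab x y. pose proof (pair_det_neq0 a b Ha Hb Hab) as Hdet.
  unfold four_term_pairs, antipairs, swap_term, joukowski, rep_val, r_lam, term_val,
    lam, alp, bet; simpl.
  unfold pair_det in *. field. repeat split; try lra. intro; nra.
Qed.

Lemma four_term_badge (a b : R) :
  1 < a -> 1 < b -> a <> b ->
  in_badges (r_lam (1/5 - 1 / (1 + joukowski a * joukowski b))) 2 2.
Proof.
  intros Ha Hb Hab. pose proof (pair_det_neq0 a b Ha Hb Hab) as Hdet.
  assert (Ha5 : a < a^5) by (assert (1 < a^4) by (apply Rlt_pow_R1; [lra | lia]); nra).
  assert (Hb5 : b < b^5) by (assert (1 < b^4) by (apply Rlt_pow_R1; [lra | lia]); nra).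
  apply (antipairs_badge _ (four_term_pairs a b)).
  - unfold four_term_pairs; repeat constructor; unfold lam; simpl; unfold Rdiv;
      apply Rmult_integral_contrapositive_currified; try apply Rinv_neq_0_compat; auto; lra.
  - exact (four_term_rep_val a b Ha Hb Hab).
  - unfold honest, four_term_pairs, antipairs, swap_term; simpl.
    repeat constructor; unfold alp, bet; simpl; intro; nra.
Qed.

(* Every l in (0, 1/5) has the form 1/5 - 1/(1 + K) with K = A B, where
   2 < A = (2 + sqrt K)/2 < B, and A = J(a), B = J(b) with 1 < a, b. *)
Lemma badge_r_lam_mid (l : R) : 0 < l < 1/5 -> in_badges (r_lam l) 2 2.
Proof.
  intros [Hl0 Hl1].
  set (K := (4 + 5 * l) / (1 - 5 * l)).
  assert (HK : 4 < K) by (unfold K; apply Rlt_gt, Rmult_lt_reg_r with (1 - 5 * l); [lra|];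
    unfold Rdiv; rewrite Rmult_assoc, Rinv_l by lra; lra).
  set (A := (2 + sqrt K) / 2). set (B := K / A).
  assert (HsK : 2 < sqrt K)
    by (rewrite <- sqrt_Rsqr with 2 by lra; apply sqrt_lt_1; unfold Rsqr; lra).
  assert (HA : 2 < A) by (unfold A; lra).
  assert (HAB : A < B).
  { unfold B. apply Rmult_lt_reg_r with A; [lra|]. unfold Rdiv.
    rewrite Rmult_assoc, Rinv_l, Rmult_1_r by lra.
    pose proof (sqrt_sqrt K ltac:(lra)). unfold A. nra. }
  destruct (joukowski_onto A HA) as [a [Ha HJa]].
  destruct (joukowski_onto B ltac:(lra)) as [b [Hb HJb]].
  assert (Hab : a <> b) by (intros ->; lra).
  replace l with (1/5 - 1 / (1 + joukowski a * joukowski b)).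
  - exact (four_term_badge a b Ha Hb Hab).
  - rewrite HJa, HJb. unfold B, K. field. split; lra.
Qed.

Theorem mainTheorem16 :
  unique_signature (r_lam 0) 3 3 /\
  unique_signature (r_lam (1/5)) 1 1 /\
  (forall l : R, 0 < l < 1/5 -> unique_signature (r_lam l) 2 2).
Proof.
  split; [|split].
  - apply antisymmetric_unique_signature;
      [apply r_lam_antisymmetric | exact badge_r0 | exact npos_ge_3].
  - apply antisymmetric_unique_signature; [apply r_lam_antisymmetric | exact badge_r15 |].
    intros L Hrep _. exact (npos_ge_1 _ L Hrep).
  - intros l Hl. apply antisymmetric_unique_signature;
      [apply r_lam_antisymmetric | exact (badge_r_lam_mid l Hl) |].
    intros L Hrep _. apply (npos_ge_2 l L); [lra | exact Hrep].
Qed.
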